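(* Let $k\geq 3$ be an odd integer and let $D$ be a directed graph whose degeneracy is $k$. Then $f(D)<\frac{k-1}{k+1}\,n(D)$.
   Context: Directed graphs are oriented graphs: finite, no loops, no multiple arcs and no pair of antiparallel arcs. $n(D)$ is the number of vertices and $f(D)$ is the minimum size of a set $F\subseteq V(D)$ such that $D-F$ contains no directed cycle. The degeneracy of $D$ is the degeneracy of its underlying undirected graph, i.e. the least $k$ such that there is an ordering of the vertices in which every vertex has at most $k$ neighbours preceding it. *)

From mathcomp Require Import all_boot.
Set Implicit Arguments. Unset Strict Implicit. Unset Printing Implicit Defensive.

(* A directed graph D on the finite vertex type T is given by its arc relation a. *)

(* Oriented graph: no loops, no pair of antiparallel arcs (multiple arcs are
   impossible since a is a relation). *)
Definition oriented (T : finType) (a : rel T) : Prop :=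
  (forall x, ~~ a x x) /\ (forall x y, ~~ (a x y && a y x)).

Definition adj (T : finType) (a : rel T) (x y : T) : bool := a x y || a y x.

Definition k_degenerate_ordering (T : finType) (a : rel T) (k : nat)
    (rank : T -> nat) : Prop :=
  injective rank /\
  forall x, #|[set y | adj a x y & rank y < rank x]| <= k.

Definition is_degeneracy (T : finType) (a : rel T) (k : nat) : Prop :=
  (exists rank, k_degenerate_ordering a k rank) /\
  (forall j rank, k_degenerate_ordering a j rank -> k <= j).

(* D - F contains a directed cycle: a nonempty closed walk following arcs,
   all of whose vertices lie outside F. *)
Definition has_dicycle_avoiding (T : finType) (a : rel T) (F : {set T}) : Prop :=
  exists s : seq T, [&& s != [::], all (fun v => v \notin F) s & cycle a s].

Definition is_fvs_number (T : finType) (a : rel T) (m : nat) : Prop :=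
  (exists F : {set T}, ~ has_dicycle_avoiding a F /\ #|F| = m) /\
  (forall F : {set T}, ~ has_dicycle_avoiding a F -> m <= #|F|).

From mathcomp Require Import all_boot zify.

(* Write k = 2h + 1 and take the last vertex v of a vertex set S in a
   k-degenerate ordering.  Its at most 2h + 1 neighbours in S are in- or
   out-neighbours, never both, so one of these classes W has at most h
   elements; outside W the vertex v is a source or a sink, hence can be added
   to any acyclic subset of S minus W and v.  Inducting on S (with sets of at
   most h + 1 vertices, where any two vertices are acyclic, as base) yields an
   acyclic A with n < (h + 1) |A|, and the complement of A is a feedback vertex
   set of size n - |A| < h n / (h + 1) = (k - 1) n / (k + 1). *)

Set Implicit Arguments.
Unset Strict Implicit.
Unset Printing Implicit Defensive.

Definition acyclic_on (T : finType) (a : rel T) (A : {set T}) : Prop :=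
  ~ has_dicycle_avoiding a (~: A).

Section AcyclicSets.

Variables (T : finType) (a : rel T).

Lemma acyclic_on0 : acyclic_on a set0.
Proof. by case=> [[|x s]] //=; rewrite setC0 in_setT. Qed.

Lemma acyclic_onU1 (A : {set T}) x : ~~ a x x -> acyclic_on a A ->
    {in A, forall u, ~~ a u x} \/ {in A, forall u, ~~ a x u} ->
  acyclic_on a (x |: A).
Proof.
move=> no_loop acycA x_extremal [s /and3P[s_nil s_in s_cycle]].
have s_sub u : u \in s -> u \in x |: A.
  by move=> us; move/allP: s_in => /(_ u us); rewrite in_setC negbK.
have [xs | xNs] := boolP (x \in s); last first.
  apply: acycA; exists s; rewrite s_nil s_cycle andbT.
  apply/allP => u us; rewrite in_setC negbK.
  by case/setU1P: (s_sub u us) => // ux; rewrite -ux us in xNs.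
case: x_extremal => [no_in | no_out].
- have := prev_cycle s_cycle xs.
  have /s_sub/setU1P[-> | /no_in/negbTE-> //] : prev s x \in s by rewrite mem_prev.
  by rewrite (negbTE no_loop).
- have := next_cycle s_cycle xs.
  have /s_sub/setU1P[-> | /no_out/negbTE-> //] : next s x \in s by rewrite mem_next.
  by rewrite (negbTE no_loop).
Qed.

Hypothesis a_oriented : oriented a.

Lemma acyclic_on1 x : acyclic_on a [set x].
Proof.
rewrite -[[set x]]setU0; apply: acyclic_onU1 (a_oriented.1 x) acyclic_on0 _.
by left=> u; rewrite in_set0.
Qed.

Lemma acyclic_on2 x y : acyclic_on a [set x; y].
Proof.
apply: acyclic_onU1 (a_oriented.1 x) (acyclic_on1 (x := y)) _.
have [yx | yNx] := boolP (a y x).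
- by right=> u /set1P ->; have := a_oriented.2 x y; rewrite yx andbT.
- by left=> u /set1P ->.
Qed.

End AcyclicSets.

Section DegenerateOrdering.

Variables (T : finType) (a : rel T) (rank : T -> nat) (h : nat).
Hypotheses (a_oriented : oriented a) (rank_inj : injective rank).

Lemma card_in_out_le_earlier (S : {set T}) v :
    {in S, forall u, rank u <= rank v} ->
  #|[set u in S | a u v]| + #|[set u in S | a v u]| <=
  #|[set y | adj a v y & rank y < rank v]|.
Proof.
move=> v_last; rewrite -cardsUI.
have -> : [set u in S | a u v] :&: [set u in S | a v u] = set0.
  by apply/setP => u; rewrite !inE andbACA (negbTE (a_oriented.2 u v)) andbF.
rewrite cards0 addn0; apply/subset_leq_card/subsetP => u.
rewrite !inE /adj => uSa.
have [uS uv] : u \in S /\ u != v.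
  case/orP: uSa => /andP[uS auv]; split=> //; apply: contraTneq auv => ->;
  exact: a_oriented.1.
rewrite ltn_neqAle v_last // andbT (inj_eq rank_inj) uv andbT.
by case/orP: uSa => /andP[_ ->]; rewrite ?orbT.
Qed.

Hypothesis rank_deg : forall x, #|[set y | adj a x y & rank y < rank x]| <= h.*2.+1.

Lemma exists_source_or_sink_off_small_set (S : {set T}) : S != set0 ->
  exists v (W : {set T}), [/\ v \in S :\: W, W \subset S, #|W| <= h &
    {in S :\: W, forall u, ~~ a u v} \/ {in S :\: W, forall u, ~~ a v u}].
Proof.
case/set0Pn => x xS; have [v vS v_last] := arg_maxnP rank xS; have {}vS : v \in S := vS.
have in_out := leq_trans (card_in_out_le_earlier v_last) (rank_deg v).
have [in_small | out_small] :
  #|[set u in S | a u v]| <= h \/ #|[set u in S | a v u]| <= h by lia.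
- exists v, [set u in S | a u v]; split=> //.
  + by rewrite !inE (negbTE (a_oriented.1 v)) vS.
  + by apply/subsetP => u; rewrite inE => /andP[].
  + by left=> u; rewrite !inE; case: (u \in S); rewrite ?andbT.
- exists v, [set u in S | a v u]; split=> //.
  + by rewrite !inE (negbTE (a_oriented.1 v)) vS.
  + by apply/subsetP => u; rewrite inE => /andP[].
  + by right=> u; rewrite !inE; case: (u \in S); rewrite ?andbT.
Qed.

Hypothesis h_gt0 : 0 < h.

Lemma small_set_has_large_acyclic_subset (S : {set T}) :
  S != set0 -> #|S| <= h.+1 ->
  exists A : {set T}, [/\ A \subset S, acyclic_on a A & #|S| < h.+1 * #|A|].
Proof.
case/set0Pn => x xS S_small; have [/eqP Sx0 | /set0Pn[y yS]] := boolP (S :\ x == set0).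
- exists [set x]; split; first by rewrite sub1set.
  + exact: acyclic_on1.
  + by rewrite (cardsD1 x) xS Sx0 cards0 cards1; lia.
- move/setD1P: yS => [yx yS].
  exists [set x; y]; split; first by rewrite subUset !sub1set xS.
  + exact: acyclic_on2.
  + by rewrite cards2 eq_sym yx; lia.
Qed.

Lemma exists_large_acyclic_subset (S : {set T}) : S != set0 ->
  exists A : {set T}, [/\ A \subset S, acyclic_on a A & #|S| < h.+1 * #|A|].
Proof.
have [n] := ubnP #|S|; elim: n S => // n IH S S_lt S_nz.
have [v [W [vSW WS W_small v_extremal]]] := exists_source_or_sink_off_small_set S_nz.
have card_S : #|S| = #|W| + (#|S :\: W :\ v|).+1.
  by rewrite -(cardsID W S) (setIidPr WS) (cardsD1 v (S :\: W)) vSW.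
have [/eqP S'0 | S'_nz] := boolP (S :\: W :\ v == set0).
  by apply: small_set_has_large_acyclic_subset; rewrite ?card_S ?S'0 ?cards0; lia.
have [|A [AS' acyclicA cardA]] := IH _ _ S'_nz; first lia.
have AS : A \subset S :\: W := subset_trans AS' (subsetDl _ _).
exists (v |: A); split.
- by rewrite subUset sub1set (subsetP (subsetDl S W)) // (subset_trans AS) ?subsetDl.
- apply: acyclic_onU1 (a_oriented.1 v) acyclicA _.
  case: v_extremal => [no_in | no_out]; [left | right] => u /(subsetP AS) uSW.
  + exact: no_in.
  + exact: no_out.
- have vNA : v \notin A by apply/negP => /(subsetP AS'); rewrite !inE eqxx.
  by rewrite cardsU1 vNA card_S; lia.
Qed.

End DegenerateOrdering.

Theorem mainTheorem6 (T : finType) (a : rel T) (k f : nat) :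
  oriented a -> 3 <= k -> odd k -> is_degeneracy a k -> is_fvs_number a f ->
  f * (k + 1) < (k - 1) * #|T|.
Proof.
move=> a_oriented k_ge3 k_odd [[rank [rank_inj rank_deg]] k_min] [_ f_min].
set h := k./2; have k_eq : k = h.*2.+1 by rewrite -[k in LHS]odd_double_half k_odd.
have T_nz : [set: T] != set0.
  apply/negP => /eqP T0; suff : k <= 0 by lia.
  apply: (k_min 0 rank); split=> // x.
  by have := in_setT x; rewrite T0 in_set0.
have h_gt0 : 0 < h by lia.
have rank_deg' x : #|[set y | adj a x y & rank y < rank x]| <= h.*2.+1.
  by rewrite -k_eq.
have [A [_ acyclicA cardA]] :=
  exists_large_acyclic_subset a_oriented rank_inj rank_deg' h_gt0 T_nz.
have := f_min _ acyclicA; have := cardsC A; rewrite cardsT in cardA.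
nia.
Qed.
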